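(* Let $M\in\mathbb{R}^{n_1\times n_2}$ have rank $r$ with compact singular value decomposition $M=U\Sigma V^*$, where $U\in\mathbb{R}^{n_1\times r}$, $V\in\mathbb{R}^{n_2\times r}$ have orthonormal columns and $\Sigma$ is diagonal with positive diagonal entries. Let $\Omega\subsetneq[n_1]\times[n_2]$ and $\tau>0$. Assume there is a matrix $Y\in\mathbb{R}^{n_1\times n_2}$ such that (a) $Y=\mathcal{P}_\Omega Y$, (b) $\mathcal{P}_{\mathrm{T}}Y=\frac{1}{\tau}M+UV^*$, (c) $\|\mathcal{P}_{\mathrm{T}^\perp}Y\|\le 1$. Then $M$ is the unique solution of $$\min_{X\in\mathbb{R}^{n_1\times n_2}}\ \|X\|_*+\frac{1}{2\tau}\|X\|_F^2\quad\text{subject to}\quad \mathcal{P}_\Omega X=\mathcal{P}_\Omega M.$$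
   Context: $[n]=\{1,\dots,n\}$. $\mathcal{P}_\Omega$ is the linear map on $\mathbb{R}^{n_1\times n_2}$ keeping the entries indexed by $\Omega$ and setting all others to zero. $\mathrm{T}=\{UX_1^*+X_2V^*: X_1\in\mathbb{R}^{n_2\times r},X_2\in\mathbb{R}^{n_1\times r}\}$, $\mathrm{T}^\perp$ its orthogonal complement with respect to the trace inner product $\langle X,Y\rangle=\mathrm{trace}(X^*Y)$, and $\mathcal{P}_{\mathrm{T}},\mathcal{P}_{\mathrm{T}^\perp}$ the orthogonal projections; explicitly $\mathcal{P}_{\mathrm{T}}Y=UU^*Y+YVV^*-UU^*YVV^*$. $\|\cdot\|$ is the spectral norm, $\|\cdot\|_*$ the nuclear norm (sum of singular values), $\|\cdot\|_F$ the Frobenius norm. *)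

From HB Require Import structures.
From mathcomp Require Import all_boot all_order all_algebra.
From mathcomp Require Import boolp classical_sets reals.
Set Implicit Arguments. Unset Strict Implicit. Unset Printing Implicit Defensive.
Import Order.TTheory GRing.Theory Num.Theory.
Local Open Scope ring_scope.

Section Defs.
Variable R : realType.

Definition rdiag_mx (m n : nat) (s : 'rV[R]_(minn m n)) : 'M[R]_(m, n) :=
  \matrix_(i < m, j < n)
    \sum_(k < minn m n) (if ((k : nat) == i) && ((k : nat) == j) then s 0 k else 0).

Definition is_svd (m n : nat) (A : 'M[R]_(m, n)) (s : 'rV[R]_(minn m n)) : Prop :=
  exists (P : 'M[R]_m) (Q : 'M[R]_n),
    [/\ P *m P^T = 1%:M, Q *m Q^T = 1%:M,
        (forall k, 0 <= s 0 k) & A = P *m rdiag_mx s *m Q^T].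

(* the vector of singular values (chosen via an SVD; any SVD gives the same
   multiset of singular values) *)
Definition svals (m n : nat) (A : 'M[R]_(m, n)) : 'rV[R]_(minn m n) :=
  xget 0 [set s | is_svd A s].

Definition nuclear_norm (m n : nat) (A : 'M[R]_(m, n)) : R :=
  \sum_(k < minn m n) svals A 0 k.

Definition spectral_norm (m n : nat) (A : 'M[R]_(m, n)) : R :=
  \big[Num.max/0]_(k < minn m n) svals A 0 k.

Definition frob_norm (m n : nat) (A : 'M[R]_(m, n)) : R :=
  Num.sqrt (\sum_(i < m) \sum_(j < n) A i j ^+ 2).

Definition P_Omega (m n : nat) (Om : {set 'I_m * 'I_n}) (X : 'M[R]_(m, n)) : 'M[R]_(m, n) :=
  \matrix_(i < m, j < n) (if (i, j) \in Om then X i j else 0).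

Definition P_T (m n r : nat) (U : 'M[R]_(m, r)) (V : 'M[R]_(n, r)) (Y : 'M[R]_(m, n))
  : 'M[R]_(m, n) :=
  U *m U^T *m Y + Y *m V *m V^T - U *m U^T *m Y *m V *m V^T.

Definition P_Tperp (m n r : nat) (U : 'M[R]_(m, r)) (V : 'M[R]_(n, r)) (Y : 'M[R]_(m, n))
  : 'M[R]_(m, n) := Y - P_T U V Y.

End Defs.

(* Put W := P_{T^perp} Y and Z := U V^T + W, so that Y = tau^-1 M + Z.  As
   U^T W = 0 = W V and ||W|| <= 1, Z is a contraction, hence <Z, X> <= ||X||_*
   for every X, while <Z, M> = tr Sigma >= ||M||_*, so <Z, M> = ||M||_*.  Since Y
   is supported on Omega, <Y, X - M> = 0 for every feasible X, and expanding the
   Frobenius term gives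
     obj X - obj M >= ||X||_* - <Z, X> + (2 tau)^-1 ||X - M||_F^2
                   >= (2 tau)^-1 ||X - M||_F^2,
   which is minimality and uniqueness.  The norms being defined through an
   arbitrary SVD, one also needs that every real matrix has one: a singular pair
   comes from a unit eigenvector of the symmetric matrix A^T A, and Householder
   reflections split it off. *)

From HB Require Import structures.
From mathcomp Require Import all_boot all_order all_algebra.
From mathcomp Require Import boolp classical_sets reals.
From mathcomp Require Import complex.
From mathcomp Require Import lra ring.
Import Order.TTheory GRing.Theory Num.Theory.
Set Implicit Arguments. Unset Strict Implicit. Unset Printing Implicit Defensive.
Local Open Scope ring_scope.

Section RowDot.
Variable R : realFieldType.

Definition vdot n (u v : 'rV[R]_n) : R := (u *m v^T) 0 0.

Lemma vdotE n (u v : 'rV[R]_n) : vdot u v = \sum_i u 0 i * v 0 i.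
Proof. by rewrite /vdot mxE; apply: eq_bigr => i _; rewrite mxE. Qed.

Lemma vdotC n (u v : 'rV[R]_n) : vdot u v = vdot v u.
Proof. by rewrite !vdotE; apply: eq_bigr => i _; rewrite mulrC. Qed.

Lemma vdotDl n (u v w : 'rV[R]_n) : vdot (u + v) w = vdot u w + vdot v w.
Proof. by rewrite /vdot mulmxDl mxE. Qed.

Lemma vdotZl n c (u w : 'rV[R]_n) : vdot (c *: u) w = c * vdot u w.
Proof. by rewrite /vdot -scalemxAl mxE. Qed.

Lemma vdotBl n (u v w : 'rV[R]_n) : vdot (u - v) w = vdot u w - vdot v w.
Proof. by rewrite vdotDl -scaleN1r vdotZl mulN1r. Qed.

Lemma vdotZr n c (u w : 'rV[R]_n) : vdot w (c *: u) = c * vdot w u.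
Proof. by rewrite vdotC vdotZl vdotC. Qed.

Lemma vdotBr n (u v w : 'rV[R]_n) : vdot w (u - v) = vdot w u - vdot w v.
Proof. by rewrite vdotC vdotBl !(vdotC w). Qed.

Lemma vdot0l n (u : 'rV[R]_n) : vdot 0 u = 0.
Proof. by rewrite /vdot mul0mx mxE. Qed.

Lemma vdot_ge0 n (u : 'rV[R]_n) : 0 <= vdot u u.
Proof. by rewrite vdotE; apply: sumr_ge0 => i _; rewrite -expr2 sqr_ge0. Qed.

Lemma vdot_eq0 n (u : 'rV[R]_n) : (vdot u u == 0) = (u == 0).
Proof.
apply/idP/eqP => [|->]; last by rewrite vdot0l.
rewrite vdotE psumr_eq0 => [/allP u0|i _]; last by rewrite -expr2 sqr_ge0.
apply/rowP => i; rewrite mxE.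
by have := u0 i (mem_index_enum _); rewrite -expr2 sqrf_eq0 => /eqP.
Qed.

Lemma twice_vdot_le n (u v : 'rV[R]_n) : 2 * vdot u v <= vdot u u + vdot v v.
Proof. by have := vdot_ge0 (u - v); rewrite vdotBl !vdotBr (vdotC v u); lra. Qed.

Lemma vdot_mulmx m n (x : 'rV[R]_m) (A : 'M[R]_(m, n)) y :
  vdot (x *m A) y = vdot x (y *m A^T).
Proof. by rewrite /vdot trmx_mul trmxK mulmxA. Qed.

Lemma mulmx_trE m n p q (X : 'M[R]_(m, n)) (A : 'M[R]_(n, p)) (Y : 'M[R]_(q, p)) i j :
  (X *m A *m Y^T) i j = vdot (row i X *m A) (row j Y).
Proof. by rewrite vdotE mxE; apply: eq_bigr => k _; rewrite -row_mul !mxE. Qed.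

Lemma vdot_row m n (P : 'M[R]_(m, n)) i j : (P *m P^T) i j = vdot (row i P) (row j P).
Proof. by rewrite -[P in P *m _]mulmx1 mulmx_trE mulmx1. Qed.

End RowDot.

Section SymmetricEigenvector.
Variable R : rcfType.
Local Open Scope complex_scope.
Local Notation Re := (@complex.Re R).
Local Notation Im := (@complex.Im R).

Lemma Re_sum (I : Type) (r : seq I) (P : pred I) (F : I -> R[i]) :
  Re (\sum_(i <- r | P i) F i) = \sum_(i <- r | P i) Re (F i).
Proof. by apply: (big_rec2 (fun a b => Re a = b)) => // i [a b] c _ <-; case: (F i). Qed.

Lemma Im_sum (I : Type) (r : seq I) (P : pred I) (F : I -> R[i]) :
  Im (\sum_(i <- r | P i) F i) = \sum_(i <- r | P i) Im (F i).
Proof. by apply: (big_rec2 (fun a b => Im a = b)) => // i [a b] c _ <-; case: (F i). Qed.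

Lemma ReM (a c : R[i]) : Re (a * c) = Re a * Re c - Im a * Im c.
Proof. by case: a; case: c. Qed.

Lemma ImM (a c : R[i]) : Im (a * c) = Re a * Im c + Im a * Re c.
Proof. by case: a; case: c. Qed.

(* A complex eigenvector x + i y of the real symmetric S: symmetry forces the
   eigenvalue to be real, and then x or y is a real eigenvector. *)
Lemma symmetric_eigenvector n (S : 'M[R]_n.+1) : S^T = S ->
  exists2 v : 'rV[R]_n.+1, v != 0 & exists l, v *m S = l *: v.
Proof.
move=> Ssym; have [a /eigenvalueP [z zS z0]] := Theorem7' (map_mx (real_complex R) S) isT.
pose x := map_mx Re z; pose y := map_mx Im z.
have z_eq0 : x = 0 -> y = 0 -> z = 0.
  move=> /rowP x0 /rowP y0; apply/rowP => i; have := x0 i; have := y0 i.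
  by rewrite !mxE; case: (z 0 i) => /= ? ? -> ->.
have xS : x *m S = Re a *: x - Im a *: y.
  apply/rowP => j; move/rowP: zS => /(_ j) /(congr1 Re).
  rewrite !mxE Re_sum ReM => <-; apply: eq_bigr => i _.
  by rewrite !mxE ReM /= mulr0 subr0.
have yS : y *m S = Im a *: x + Re a *: y.
  apply/rowP => j; move/rowP: zS => /(_ j) /(congr1 Im).
  rewrite !mxE Im_sum ImM addrC => <-; apply: eq_bigr => i _.
  by rewrite !mxE ImM /= mulr0 add0r.
have xSy : vdot (x *m S) y = vdot (y *m S) x by rewrite vdot_mulmx Ssym vdotC.
rewrite xS yS vdotBl vdotDl !vdotZl (vdotC x y) in xSy.
have Ima0 : Im a = 0.
  have : Im a * (vdot x x + vdot y y) = 0 by lra.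
  move/eqP; rewrite mulf_eq0 paddr_eq0 ?vdot_ge0 // !vdot_eq0 => /orP[/eqP //|].
  by case/andP => /eqP x0 /eqP y0; case/eqP: z0; apply: z_eq0.
rewrite Ima0 scale0r subr0 in xS; rewrite Ima0 scale0r add0r in yS.
have [x0|x0] := eqVneq x 0; last by exists x => //; exists (Re a).
exists y; last by exists (Re a).
by apply: contra_neq z0; apply: z_eq0.
Qed.

End SymmetricEigenvector.

Section Orthogonal.
Variable R : realFieldType.

Definition orthogonalmx n (P : 'M[R]_n) : Prop := P *m P^T = 1%:M.

Lemma orthogonalmx_pid_cols p k (P : 'M[R]_p) : orthogonalmx P -> (k <= p)%N ->
  (P *m pid_mx k)^T *m (P *m pid_mx k) = 1%:M :> 'M_k.
Proof.
move=> oP kp; rewrite trmx_mul mulmxA -(mulmxA _ P^T) (mulmx1C oP) mulmx1.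
by rewrite tr_pid_mx pid_mx_id ?pid_mx_1.
Qed.

Lemma orthogonalmxM n (P Q : 'M[R]_n) :
  orthogonalmx P -> orthogonalmx Q -> orthogonalmx (P *m Q).
Proof. by move=> oP oQ; rewrite /orthogonalmx trmx_mul mulmxA -(mulmxA P) oQ mulmx1. Qed.

Lemma orthogonalmx_block1 n (P : 'M[R]_n) :
  orthogonalmx P -> orthogonalmx (block_mx (1%:M : 'M_1) 0 0 P).
Proof.
move=> oP; rewrite /orthogonalmx tr_block_mx !trmx0 trmx1 mulmx_block.
by rewrite !mulmx0 !mul0mx !mulmx1 !addr0 !add0r oP -scalar_mx_block.
Qed.

Definition householder n (w : 'rV[R]_n) : 'M[R]_n :=
  1%:M - (2 / vdot w w) *: (w^T *m w).

Lemma householder_tr n (w : 'rV[R]_n) : (householder w)^T = householder w.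
Proof. by rewrite /householder linearB /= linearZ /= trmx_mul trmxK trmx1. Qed.

Lemma householder_orthogonal n (w : 'rV[R]_n) : orthogonalmx (householder w).
Proof.
rewrite /orthogonalmx householder_tr /householder; set k := 2 / vdot w w.
have ww : w *m w^T = (vdot w w)%:M by rewrite [LHS]mx11_scalar.
have kk : k ^+ 2 * vdot w w = 2 * k.
  by rewrite /k; have [->|w0] := eqVneq (vdot w w) 0; [rewrite invr0 !mulr0 | field].
rewrite mulmxBl mul1mx mulmxBr mulmx1 -!scalemxAl -!scalemxAr.
rewrite mulmxA -(mulmxA w^T) ww mul_mx_scalar -scalemxAl !scalerA mulrA -expr2 kk.
by move: (w^T *m w) => W; apply/matrixP => i j; rewrite !mxE; ring.
Qed.

Lemma householder_unit n (e u : 'rV[R]_n) : vdot e e = 1 -> vdot u u = 1 ->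
  e *m householder (e - u) = u.
Proof.
move=> e1 u1; set w := e - u.
have ww : vdot w w = 2 * (1 - vdot e u).
  by rewrite /w vdotBl !vdotBr e1 u1 (vdotC u e); ring.
have ew : vdot e w = 1 - vdot e u by rewrite /w vdotBr e1.
have ewE : e *m w^T = (vdot e w)%:M by rewrite [LHS]mx11_scalar.
rewrite /householder mulmxBr mulmx1 -scalemxAr mulmxA ewE mul_scalar_mx scalerA.
have [w0|w0] := eqVneq (vdot w w) 0.
  move/eqP: w0; rewrite vdot_eq0 /w subr_eq0 => /eqP ->.
  by rewrite subrr vdot0l invr0 mulr0 mul0r scale0r subr0.
have -> : 2 / vdot w w * vdot e w = 1.
  by rewrite ww ew; field; move: w0; rewrite ww mulf_eq0 negb_or => /andP[].
by rewrite scale1r /w opprB addrC subrK.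
Qed.

End Orthogonal.

Section SingularPair.
Variable R : rcfType.

Lemma vdot_normalize n (x : 'rV[R]_n) : x != 0 ->
  vdot ((Num.sqrt (vdot x x))^-1 *: x) ((Num.sqrt (vdot x x))^-1 *: x) = 1.
Proof.
rewrite -vdot_eq0 => x0; rewrite vdotZl vdotZr mulrA -expr2 exprVn.
by rewrite sqr_sqrtr ?vdot_ge0 // mulVf.
Qed.

Lemma symmetric_unit_eigenvector n (S : 'M[R]_n.+1) : S^T = S ->
  exists2 v : 'rV[R]_n.+1, vdot v v = 1 & exists l, v *m S = l *: v.
Proof.
move=> /symmetric_eigenvector [x x0 [l xS]].
exists ((Num.sqrt (vdot x x))^-1 *: x); first exact: vdot_normalize.
by exists l; rewrite -scalemxAl xS !scalerA mulrC.
Qed.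

Definition singular_pair m n (A : 'M[R]_(m, n)) u v (s : R) :=
  [/\ vdot u u = 1, vdot v v = 1, 0 <= s, u *m A = s *: v & v *m A^T = s *: u].

Lemma singular_pair_tr m n (A : 'M[R]_(m, n)) u v s :
  singular_pair A^T v u s -> singular_pair A u v s.
Proof. by case=> v1 u1 s0 vA uA; split => //; rewrite -(trmxK A). Qed.

Lemma singular_pair_eigenvector m n (A : 'M[R]_(m, n)) v l :
  vdot v v = 1 -> v *m (A^T *m A) = l *: v -> v *m A^T != 0 ->
  exists u s, singular_pair A u v s.
Proof.
move=> v1 vAA; set a := v *m A^T; rewrite -vdot_eq0 => a0.
have aa : vdot a a = l.
  by rewrite /a vdot_mulmx trmxK -mulmxA vAA vdotZr v1 mulr1.
set s := Num.sqrt (vdot a a).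
have s0 : 0 < s by rewrite sqrtr_gt0 lt_def a0 vdot_ge0.
exists (s^-1 *: a), s; split; rewrite ?vdot_normalize ?(ltW s0) -?vdot_eq0 //.
  rewrite -scalemxAl /a -mulmxA vAA scalerA -aa -[vdot a a]sqr_sqrtr ?vdot_ge0 //.
  by rewrite -/s expr2 mulKf ?gt_eqF.
by rewrite scalerA mulfV ?gt_eqF // scale1r.
Qed.

(* A unit eigenvector v of A^T A gives a pair unless v A^T = 0; then v pairs with
   singular value 0 with a unit vector of the left kernel of A, if there is one.
   If there is none, a unit eigenvector of A A^T is not annihilated by A. *)
Lemma singular_pair_exists m n (A : 'M[R]_(m.+1, n.+1)) :
  exists u v s, singular_pair A u v s.
Proof.
have AtA : (A^T *m A)^T = A^T *m A by rewrite trmx_mul trmxK.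
have AAt : (A *m A^T)^T = A *m A^T by rewrite trmx_mul trmxK.
have [[u [u1 uA]] | ker0] := pselect (exists u, vdot u u = 1 /\ u *m A = 0).
  have [v v1 [l vAA]] := symmetric_unit_eigenvector AtA.
  have [vA|vA] := eqVneq (v *m A^T) 0.
    by exists u, v, 0; split; rewrite ?uA ?vA ?scale0r.
  by have [u' [s ?]] := singular_pair_eigenvector v1 vAA vA; exists u', v, s.
have [u u1 [l uAA]] := symmetric_unit_eigenvector AAt.
have uA : u *m A^T^T != 0 by rewrite trmxK; apply/eqP => uA; apply: ker0; exists u.
have uAA' : u *m (A^T^T *m A^T) = l *: u by rewrite trmxK.
have [v [s ?]] := singular_pair_eigenvector u1 uAA' uA.
by exists u, v, s; apply: singular_pair_tr.
Qed.

End SingularPair.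

Section SVD.
Variable R : rcfType.

Definition nonneg_rdiag m n (D : 'M[R]_(m, n)) : Prop :=
  forall (i : 'I_m) (j : 'I_n), if i == j :> nat then 0 <= D i j else D i j == 0.

Lemma nonneg_rdiag_block m n (s : R) (D : 'M[R]_(m, n)) :
  0 <= s -> nonneg_rdiag D -> nonneg_rdiag (block_mx (s%:M : 'M_1) 0 0 D).
Proof.
move=> s0 dD i j; rewrite -(splitK i) -(splitK j).
case: (split i) => i'; case: (split j) => j' /=.
- by rewrite block_mxEul !ord1 mxE.
- by rewrite block_mxEur mxE; case: ifP.
- by rewrite block_mxEdl mxE; case: ifP.
- by rewrite block_mxEdr eqSS.
Qed.

Lemma mul_block_diag1 m n (s : R) (P : 'M[R]_m) (D : 'M[R]_(m, n)) (Q : 'M[R]_n) :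
  block_mx (1%:M : 'M_1) 0 0 P *m block_mx (s%:M : 'M_1) 0 0 D *m
  (block_mx (1%:M : 'M_1) 0 0 Q)^T = block_mx (s%:M : 'M_1) 0 0 (P *m D *m Q^T).
Proof.
rewrite tr_block_mx !trmx0 trmx1 !mulmx_block.
by rewrite !(mulmx0, mul0mx, mulmx1, mul1mx, addr0, add0r).
Qed.

Lemma row0_householder n (u : 'rV[R]_n.+1) : vdot u u = 1 ->
  row 0 (householder (delta_mx 0 0 - u)) = u.
Proof.
by move=> u1; rewrite rowE householder_unit // /vdot trmx_delta mul_delta_mx mxE.
Qed.

(* Householder reflections sending the first basis vectors to u and v split a
   singular pair off A. *)
Lemma singular_pair_deflate m n (A : 'M[R]_(m.+1, n.+1)) u v s :
  singular_pair A u v s -> exists P Q (B : 'M[R]_(m, n)),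
  [/\ orthogonalmx P, orthogonalmx Q & A = P *m block_mx (s%:M : 'M_1) 0 0 B *m Q^T].
Proof.
case=> u1 v1 s0 uA vA.
set P := householder (delta_mx 0 0 - u); set Q := householder (delta_mx 0 0 - v).
have oP : orthogonalmx P := householder_orthogonal _.
have oQ : orthogonalmx Q := householder_orthogonal _.
have P0 : row 0 P = u := row0_householder u1.
have Q0 : row 0 Q = v := row0_householder v1.
set C : 'M_(1 + m, 1 + n) := P *m A *m Q^T.
have PP : P *m P = 1%:M by have := oP; rewrite /orthogonalmx householder_tr.
have QQ : Q^T *m Q^T = 1%:M by have := oQ; rewrite /orthogonalmx householder_tr.
have AC : A = P *m C *m Q^T by rewrite /C !mulmxA PP mul1mx -mulmxA QQ mulmx1.
have lshift0 k : lshift k (0 : 'I_1) = 0 by apply: val_inj.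
have Cur : ursubmx C = 0.
  apply/matrixP => i j; rewrite mxE [RHS]mxE ord1 [usubmx _ _ _]mxE /C mulmx_trE.
  by rewrite lshift0 P0 uA vdotZl -Q0 -vdot_row oQ mxE mulr0.
have Cdl : dlsubmx C = 0.
  apply/matrixP => i j; rewrite mxE [RHS]mxE ord1 [dsubmx _ _ _]mxE /C mulmx_trE.
  by rewrite lshift0 Q0 vdot_mulmx vA vdotZr -P0 -vdot_row oP mxE mulr0.
have Cul : ulsubmx C = s%:M.
  apply/matrixP => i j; rewrite mxE [RHS]mxE !ord1 [usubmx _ _ _]mxE /C mulmx_trE.
  by rewrite !lshift0 P0 Q0 uA vdotZl v1 mulr1.
exists P, Q, (drsubmx C); split => //.
by rewrite {1}AC -Cur -Cdl -Cul submxK.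
Qed.

Lemma svd_factor m n (A : 'M[R]_(m, n)) :
  exists P Q D, [/\ orthogonalmx P, orthogonalmx Q, nonneg_rdiag D & A = P *m D *m Q^T].
Proof.
elim: m n A => [|m IH] [|n] A; last first.
  have [u [v [s uvs]]] := singular_pair_exists A.
  have [P [Q [B [oP oQ AB]]]] := singular_pair_deflate uvs.
  have [P1 [Q1 [D1 [oP1 oQ1 dD1 BE]]]] := IH _ B.
  exists (P *m block_mx (1%:M : 'M_1) 0 0 P1), (Q *m block_mx (1%:M : 'M_1) 0 0 Q1),
    (block_mx (s%:M : 'M_1) 0 0 D1); split.
  - by apply: orthogonalmxM => //; apply: orthogonalmx_block1.
  - by apply: orthogonalmxM => //; apply: orthogonalmx_block1.
  - by case: uvs => _ _ s0 _ _; apply: nonneg_rdiag_block.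
  by rewrite [LHS]AB BE -mul_block_diag1 trmx_mul !mulmxA.
all: exists 1%:M, 1%:M, 0; split; rewrite /orthogonalmx ?trmx1 ?mulmx1 ?mul0mx //.
all: try by move=> i j; rewrite mxE lexx eqxx; case: ifP.
all: by rewrite ?thinmx0 ?flatmx0.
Qed.

End SVD.

Section SingularValues.
Variable R : realType.

Lemma nonneg_rdiag_rdiag_mx m n (D : 'M[R]_(m, n)) : nonneg_rdiag D ->
  exists2 d : 'rV[R]_(minn m n), (forall k, 0 <= d 0 k) & D = rdiag_mx d.
Proof.
move=> dD; pose wm := widen_ord (geq_minl m n); pose wn := widen_ord (geq_minr m n).
exists (\row_k D (wm k) (wn k)) => [k|].
  by rewrite mxE; have := dD (wm k) (wn k); rewrite eqxx.
apply/matrixP => i j; rewrite mxE; have := dD i j.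
case: eqP => [ij _ | nij /eqP ->]; last first.
  rewrite big1 // => k _; case: ifP => // /andP[/eqP ki /eqP kj].
  by case: nij; rewrite -ki -kj.
have ilt : (i < minn m n)%N by rewrite leq_min ltn_ord ij ltn_ord.
have ij' : i == j :> nat by apply/eqP.
rewrite (bigD1 (Ordinal ilt)) //= eqxx ij' big1 ?addr0 => [|k /negbTE kn].
  by rewrite mxE; congr (D _ _); apply: val_inj.
case: ifP => // /andP[/eqP ki _]; move: kn.
by rewrite (_ : k = Ordinal ilt) ?eqxx //; apply: val_inj.
Qed.

Lemma svals_svd m n (A : 'M[R]_(m, n)) : is_svd A (svals A).
Proof.
apply: xgetPex; have [P [Q [D [oP oQ dD AE]]]] := svd_factor A.
by have [d d0 DE] := nonneg_rdiag_rdiag_mx dD; exists d, P, Q; rewrite AE DE.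
Qed.

Lemma thin_svd m n (X : 'M[R]_(m, n)) s : is_svd X s ->
  exists (U : 'M[R]_(m, minn m n)) (V : 'M[R]_(n, minn m n)),
  [/\ U^T *m U = 1%:M, V^T *m V = 1%:M & X = U *m diag_mx s *m V^T].
Proof.
case=> P [Q [oP oQ s0 XE]].
exists (P *m pid_mx (minn m n)), (Q *m pid_mx (minn m n)); split.
- by rewrite orthogonalmx_pid_cols ?geq_minl.
- by rewrite orthogonalmx_pid_cols ?geq_minr.
rewrite XE trmx_mul !mulmxA; congr (_ *m _); rewrite -!(mulmxA P); congr (_ *m _).
apply/matrixP => i j; rewrite mul_mx_diag !mxE; apply: eq_bigr => k _.
rewrite !mxE (eq_sym (i : nat)) (eq_sym (j : nat)).
by case: (k == i :> nat) / eqP => [<-|]; case: (k == j :> nat) / eqP => [<-|];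
  rewrite /= ?ltn_ord ?mul1r ?mulr1 ?mul0r ?mulr0 ?andbF.
Qed.

End SingularValues.

Section Contraction.
Variable R : realFieldType.

(* The polarised form of [||Z|| <= 1]: [2 a Z b^T <= |a|^2 + |b|^2] for all a, b. *)
Definition contraction m n (Z : 'M[R]_(m, n)) : Prop :=
  forall a b, 2 * vdot (a *m Z) b <= vdot a a + vdot b b.

Lemma vdot_proj_compl m n (U : 'M[R]_(m, n)) a : U^T *m U = 1%:M ->
  vdot (a - a *m U *m U^T) (a - a *m U *m U^T) = vdot a a - vdot (a *m U) (a *m U).
Proof.
move=> UU; have aUU : vdot a (a *m U *m U^T) = vdot (a *m U) (a *m U) by rewrite vdot_mulmx.
have UUUU : vdot (a *m U *m U^T) (a *m U *m U^T) = vdot (a *m U) (a *m U).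
  by rewrite vdot_mulmx trmxK -mulmxA UU mulmx1.
rewrite vdotBl !vdotBr UUUU (vdotC (a *m U *m U^T)) aUU; ring.
Qed.

Lemma bessel m n (U : 'M[R]_(m, n)) a : U^T *m U = 1%:M ->
  vdot (a *m U) (a *m U) <= vdot a a.
Proof. by move=> UU; rewrite -subr_ge0 -vdot_proj_compl // vdot_ge0. Qed.

Lemma contraction_thin_svd m n r (U : 'M[R]_(m, r)) (V : 'M[R]_(n, r)) (s : 'rV[R]_r) :
  U^T *m U = 1%:M -> V^T *m V = 1%:M -> (forall k, 0 <= s 0 k <= 1) ->
  contraction (U *m diag_mx s *m V^T).
Proof.
move=> UU VV s01 a b; rewrite !mulmxA vdot_mulmx trmxK.
apply: (le_trans _ (lerD (bessel a UU) (bessel b VV))).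
rewrite !vdotE mulr_sumr -big_split /=; apply: ler_sum => k _.
rewrite mul_mx_diag mxE; have /andP[s0 s1] := s01 k.
move: (s 0 k) ((a *m U) 0 k) ((b *m V) 0 k) s0 s1 => t x y t0 t1.
have : 0 <= (1 - t * t) * (y * y) by rewrite mulr_ge0 -?expr2 ?sqr_ge0 // subr_ge0; nra.
have := sqr_ge0 (x - t * y); nra.
Qed.

Lemma contraction_add_orth m n r (U : 'M[R]_(m, r)) (V : 'M[R]_(n, r))
  (W : 'M[R]_(m, n)) :
  U^T *m U = 1%:M -> V^T *m V = 1%:M -> U^T *m W = 0 -> W *m V = 0 -> contraction W ->
  contraction (U *m V^T + W).
Proof.
move=> UU VV UW WV cW a b.
set a' := a - a *m U *m U^T; set b' := b - b *m V *m V^T.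
have aUV : vdot (a *m (U *m V^T)) b = vdot (a *m U) (b *m V).
  by rewrite mulmxA vdot_mulmx trmxK.
have aW : a *m W = a' *m W by rewrite /a' mulmxBl -!mulmxA UW !mulmx0 subr0.
have Wb : vdot (a' *m W) b = vdot (a' *m W) b'.
  by rewrite /b' vdotBr -vdot_mulmx -mulmxA WV mulmx0 vdot0l subr0.
have a'a' : vdot a' a' = vdot a a - vdot (a *m U) (a *m U) by apply: vdot_proj_compl.
have b'b' : vdot b' b' = vdot b b - vdot (b *m V) (b *m V) by apply: vdot_proj_compl.
rewrite mulmxDr vdotDl aUV aW Wb.
have := cW a' b'; have := twice_vdot_le (a *m U) (b *m V); lra.
Qed.

Definition mxdot m n (A B : 'M[R]_(m, n)) : R := \tr (A^T *m B).

Lemma mxdotE m n (A B : 'M[R]_(m, n)) : mxdot A B = \sum_i \sum_j A i j * B i j.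
Proof.
rewrite /mxdot /mxtrace exchange_big; apply: eq_bigr => j _; rewrite mxE.
by apply: eq_bigr => i _; rewrite mxE.
Qed.

Lemma mxdotC m n (A B : 'M[R]_(m, n)) : mxdot A B = mxdot B A.
Proof. by rewrite /mxdot -mxtrace_tr trmx_mul trmxK. Qed.

Lemma mxdotDl m n (A B C : 'M[R]_(m, n)) : mxdot (A + B) C = mxdot A C + mxdot B C.
Proof. by rewrite /mxdot linearD /= mulmxDl mxtraceD. Qed.

Lemma mxdotZl m n c (A C : 'M[R]_(m, n)) : mxdot (c *: A) C = c * mxdot A C.
Proof. by rewrite /mxdot linearZ /= -scalemxAl mxtraceZ. Qed.

Lemma mxdotBl m n (A B C : 'M[R]_(m, n)) : mxdot (A - B) C = mxdot A C - mxdot B C.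
Proof. by rewrite mxdotDl -scaleN1r mxdotZl mulN1r. Qed.

Lemma mxdotBr m n (A B C : 'M[R]_(m, n)) : mxdot C (A - B) = mxdot C A - mxdot C B.
Proof. by rewrite mxdotC mxdotBl !(mxdotC C). Qed.

Lemma mxdot_ge0 m n (A : 'M[R]_(m, n)) : 0 <= mxdot A A.
Proof. by rewrite mxdotE; do 2![apply: sumr_ge0 => ? _]; rewrite -expr2 sqr_ge0. Qed.

Lemma mxdot_eq0 m n (A : 'M[R]_(m, n)) : (mxdot A A == 0) = (A == 0).
Proof.
apply/idP/eqP => [|->]; last by rewrite /mxdot mulmx0 linear0.
rewrite mxdotE psumr_eq0 => [/allP A0|i _]; last first.
  by apply: sumr_ge0 => j _; rewrite -expr2 sqr_ge0.
apply/matrixP => i j; rewrite mxE; move/(_ i (mem_index_enum _)): A0.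
rewrite psumr_eq0 => [/allP/(_ j (mem_index_enum _))|k _]; last by rewrite -expr2 sqr_ge0.
by rewrite -expr2 sqrf_eq0 => /eqP.
Qed.

Lemma mxdot_thin_svd m n r (U : 'M[R]_(m, r)) (V : 'M[R]_(n, r)) (s : 'rV[R]_r) :
  U^T *m U = 1%:M -> V^T *m V = 1%:M ->
  mxdot (U *m V^T) (U *m diag_mx s *m V^T) = \sum_k s 0 k.
Proof.
move=> UU VV; rewrite /mxdot trmx_mul trmxK !mulmxA -(mulmxA V) UU mulmx1.
by rewrite mxtrace_mulC mulmxA VV mul1mx mxtrace_diag.
Qed.

Lemma mxdot_thin_svd_le m n r (Z : 'M[R]_(m, n)) (U : 'M[R]_(m, r)) (V : 'M[R]_(n, r))
  (s : 'rV[R]_r) :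
  U^T *m U = 1%:M -> V^T *m V = 1%:M -> (forall k, 0 <= s 0 k) -> contraction Z ->
  mxdot Z (U *m diag_mx s *m V^T) <= \sum_k s 0 k.
Proof.
move=> UU VV s0 cZ; rewrite /mxdot !mulmxA mxtrace_mulC !mulmxA /mxtrace.
apply: ler_sum => k _; rewrite mul_mx_diag mxE -[U in _ *m U](trmxK U) mulmx_trE.
rewrite vdot_mulmx trmxK vdotC.
have := cZ (row k U^T) (row k V^T); rewrite -!vdot_row !trmxK UU VV !mxE eqxx /=.
by have := s0 k; nra.
Qed.

End Contraction.

Section NuclearNorm.
Variable R : realType.

Lemma spectral_norm_contraction m n (Z : 'M[R]_(m, n)) :
  spectral_norm Z <= 1 -> contraction Z.
Proof.
move=> Z1; have sZ := svals_svd Z; have [_ [_ [_ _ s0 _]]] := sZ.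
have [U [V [UU VV ->]]] := thin_svd sZ.
apply: contraction_thin_svd => // k; rewrite s0 (le_trans _ Z1) //.
exact: le_bigmax.
Qed.

Lemma mxdot_le_nuclear_norm m n (Z X : 'M[R]_(m, n)) :
  contraction Z -> mxdot Z X <= nuclear_norm X.
Proof.
move=> cZ; have sX := svals_svd X; have [_ [_ [_ _ s0 _]]] := sX.
have [U [V [UU VV XE]]] := thin_svd sX.
by rewrite [in mxdot _ _]XE; apply: mxdot_thin_svd_le.
Qed.

Lemma nuclear_norm_thin_svd_le m n r (U : 'M[R]_(m, r)) (V : 'M[R]_(n, r))
  (s : 'rV[R]_r) :
  U^T *m U = 1%:M -> V^T *m V = 1%:M -> (forall k, 0 <= s 0 k) ->
  nuclear_norm (U *m diag_mx s *m V^T) <= \sum_k s 0 k.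
Proof.
move=> UU VV s0; set X := U *m _ *m _.
have [P [Q [PP QQ XE]]] := thin_svd (svals_svd X).
have cPQ : contraction (P *m Q^T).
  rewrite -[P]mulmx1 -diag_const_mx.
  by apply: contraction_thin_svd => // k; rewrite mxE ler01 lexx.
rewrite /nuclear_norm -(mxdot_thin_svd (svals X) PP QQ) -XE.
exact: mxdot_thin_svd_le.
Qed.

Lemma frob_norm_sqr m n (X : 'M[R]_(m, n)) : frob_norm X ^+ 2 = mxdot X X.
Proof.
rewrite /frob_norm sqr_sqrtr ?mxdotE //.
by apply: sumr_ge0 => i _; apply: sumr_ge0 => j _; rewrite sqr_ge0.
Qed.

(* [tau^-1 M + Z] is a subgradient of the objective at [M]. *)
Lemma nuclear_frob_gap m n (tau : R) (Z M X : 'M[R]_(m, n)) :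
  0 < tau -> contraction Z -> mxdot Z M = nuclear_norm M ->
  mxdot (tau^-1 *: M + Z) (X - M) = 0 ->
  nuclear_norm M + (2 * tau)^-1 * frob_norm M ^+ 2
    + (2 * tau)^-1 * mxdot (X - M) (X - M)
  <= nuclear_norm X + (2 * tau)^-1 * frob_norm X ^+ 2.
Proof.
move=> tau0 cZ ZM orth; have := mxdot_le_nuclear_norm X cZ.
move: orth; rewrite !frob_norm_sqr mxdotDl mxdotZl !mxdotBr !mxdotBl invfM (mxdotC X M).
by rewrite -ZM; lra.
Qed.

End NuclearNorm.

Section Projections.
Variable R : realType.

Lemma mxdot_P_Omega m n (Om : {set 'I_m * 'I_n}) (Y X : 'M[R]_(m, n)) :
  Y = P_Omega Om Y -> mxdot Y X = mxdot Y (P_Omega Om X).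
Proof.
move=> YO; rewrite !mxdotE; apply: eq_bigr => i _; apply: eq_bigr => j _.
rewrite mxE; case: ifP => // ij.
by move/matrixP: YO => /(_ i j); rewrite mxE ij => ->; rewrite !mul0r.
Qed.

Variables (m n r : nat) (U : 'M[R]_(m, r)) (V : 'M[R]_(n, r)).
Hypotheses (UU : U^T *m U = 1%:M) (VV : V^T *m V = 1%:M).

Lemma trmx_mul_P_Tperp Y : U^T *m P_Tperp U V Y = 0.
Proof. by rewrite /P_Tperp /P_T !mulmxBr !mulmxDr !mulmxA UU !mul1mx addrK subrr. Qed.

Lemma P_Tperp_mul Y : P_Tperp U V Y *m V = 0.
Proof.
rewrite /P_Tperp /P_T !mulmxBl !mulmxDl -!mulmxA VV !mulmx1.
by rewrite [X in _ - X]addrC addKr subrr.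
Qed.

End Projections.

Unset Implicit Arguments.
Theorem theorem3 (R : realType) (n1 n2 r : nat)
  (M : 'M[R]_(n1, n2)) (U : 'M[R]_(n1, r)) (V : 'M[R]_(n2, r)) (sig : 'rV[R]_r)
  (Om : {set 'I_n1 * 'I_n2}) (tau : R) :
  \rank M = r ->
  U^T *m U = 1%:M ->
  V^T *m V = 1%:M ->
  (forall k, 0 < sig 0 k) ->
  M = U *m diag_mx sig *m V^T ->
  Om \proper [set: 'I_n1 * 'I_n2]%SET ->
  0 < tau ->
  (exists Y : 'M[R]_(n1, n2),
      [/\ Y = P_Omega Om Y,
          P_T U V Y = tau^-1 *: M + U *m V^T
        & spectral_norm (P_Tperp U V Y) <= 1]) ->
  let obj := fun X : 'M[R]_(n1, n2) =>
    nuclear_norm X + (2 * tau)^-1 * frob_norm X ^+ 2 in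
  (forall X : 'M[R]_(n1, n2), P_Omega Om X = P_Omega Om M -> obj M <= obj X) /\
  (forall X : 'M[R]_(n1, n2), P_Omega Om X = P_Omega Om M -> obj X <= obj M -> X = M).
Proof.
move=> _ UU VV sig0 ME _ tau0 [Y [YO PTY W1]] obj.
set W := P_Tperp U V Y; set Z := U *m V^T + W.
have cZ : contraction Z.
  apply: contraction_add_orth; rewrite ?trmx_mul_P_Tperp ?P_Tperp_mul //.
  exact: spectral_norm_contraction.
have YE : Y = tau^-1 *: M + Z by rewrite /Z /W /P_Tperp PTY addrA addrC subrK.
have ZM : mxdot Z M = nuclear_norm M.
  have ZMsig : mxdot Z M = \sum_k sig 0 k.
    rewrite /Z mxdotDl {1}ME mxdot_thin_svd // (_ : mxdot W M = 0) ?addr0 //.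
    rewrite ME /mxdot !mulmxA -(trmxK U) -trmx_mul trmx_mul_P_Tperp //.
    by rewrite trmx0 !mul0mx linear0.
  apply/le_anti; rewrite mxdot_le_nuclear_norm //= ZMsig ME.
  by apply: nuclear_norm_thin_svd_le => // k; apply: ltW.
have gap X : P_Omega Om X = P_Omega Om M ->
    obj M + (2 * tau)^-1 * mxdot (X - M) (X - M) <= obj X.
  move=> XM; apply: nuclear_frob_gap => //; rewrite -YE mxdotBr.
  by rewrite (mxdot_P_Omega X YO) (mxdot_P_Omega M YO) XM subrr.
have tau2 : 0 < (2 * tau)^-1 by rewrite invr_gt0 mulr_gt0.
split=> X /gap gapX; have dXM := mxdot_ge0 (X - M).
  by have := mulr_ge0 (ltW tau2) dXM; lra.
move=> XleM; apply/eqP; rewrite -subr_eq0 -mxdot_eq0 eq_le dXM andbT.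
by rewrite -(pmulr_rle0 _ tau2); lra.
Qed.
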